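(* Let $X$ be a real $n\times p$ matrix ($p<n$) of full rank, let $\sigma>0$, $f\in\mathbb{R}^p$, $z\in\mathbb{R}^n$, and $y=Xf+z$. Let $z=X\bar g+\bar b$ be the unique decomposition with $\bar g\in\mathbb{R}^p$ and $\bar b\in\ker X^\top$, and set $f_n=f+\bar g$. If $\|\bar b\|_\infty<\sigma$, then $(f_n,\bar b)$ is the unique solution of $$\min_{(g,b)\in\mathbb{R}^p\times\mathbb{R}^n}\ \sigma\|y-Xg-b\|_1+\tfrac12\|b\|_2^2.$$
   Context: $f_n$ is the least squares estimator $(X^\top X)^{-1}X^\top y$. *)

From mathcomp Require Import all_boot all_order all_algebra.
Set Implicit Arguments. Unset Strict Implicit. Unset Printing Implicit Defensive.
Import Order.TTheory GRing.Theory Num.Theory.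
Local Open Scope ring_scope.

Definition norm1 (R : realDomainType) (n : nat) (v : 'cV[R]_n) : R :=
  \sum_(i < n) `|v i 0|.
Definition norm2sq (R : realDomainType) (n : nat) (v : 'cV[R]_n) : R :=
  \sum_(i < n) (v i 0) ^+ 2.
Definition norminf (R : realDomainType) (n : nat) (v : 'cV[R]_n) : R :=
  \big[Num.max/0]_(i < n) `|v i 0|.

Definition objective (R : realFieldType) (n p : nat) (sigma : R)
  (X : 'M[R]_(n, p)) (y : 'cV[R]_n) (g : 'cV[R]_p) (b : 'cV[R]_n) : R :=
  sigma * norm1 (y - X *m g - b) + 2^-1 * norm2sq b.

Definition unique_minimizer (R : realFieldType) (n p : nat) (sigma : R)
  (X : 'M[R]_(n, p)) (y : 'cV[R]_n) (g : 'cV[R]_p) (b : 'cV[R]_n) : Prop :=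
  (forall g' b', objective sigma X y g b <= objective sigma X y g' b') /\
  (forall g' b', objective sigma X y g' b' <= objective sigma X y g b ->
                 g' = g /\ b' = b).

From mathcomp Require Import all_boot all_order all_algebra.
From mathcomp Require Import ring lra.
Set Implicit Arguments. Unset Strict Implicit. Unset Printing Implicit Defensive.
Import Order.TTheory GRing.Theory Num.Theory.
Local Open Scope ring_scope.

(* Write y = X g0 + bbar with g0 = f + gbar and r = y - X g - b for the
   residual of a competitor (g, b).  Since bbar is orthogonal to the range of
   X, the excess of the objective over its value at (g0, bbar) is
     sigma ||r||_1 - <bbar, r> + 1/2 ||b - bbar||_2^2,
   and Hoelder's inequality bounds <bbar, r> by ||bbar||_inf ||r||_1 <
   sigma ||r||_1 unless r = 0.  So the excess is nonnegative and vanishes only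
   when r = 0 and b = bbar, which forces X g = X g0, i.e. g = g0 since X has
   full column rank. *)

Definition dotc (R : pzRingType) (n : nat) (u v : 'cV[R]_n) : R :=
  \sum_(i < n) u i 0 * v i 0.

Lemma dotcE (R : comPzRingType) (n : nat) (u v : 'cV[R]_n) :
  dotc u v = (u^T *m v) 0 0.
Proof. by rewrite /dotc mxE; apply: eq_bigr => i _; rewrite mxE. Qed.

Lemma dotcBr (R : pzRingType) (n : nat) (u v w : 'cV[R]_n) :
  dotc u (v - w) = dotc u v - dotc u w.
Proof. by rewrite /dotc -sumrB; apply: eq_bigr => i _; rewrite !mxE mulrBr. Qed.

Lemma dotc_ker_trmx (R : comPzRingType) (m n : nat) (A : 'M[R]_(m, n))
    (b : 'cV[R]_m) (d : 'cV[R]_n) :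
  A^T *m b = 0 -> dotc b (A *m d) = 0.
Proof.
move=> Ab0; rewrite dotcE mulmxA -[b^T *m A]trmxK trmx_mul trmxK Ab0.
by rewrite trmx0 !mul0mx mxE.
Qed.

Lemma mulmx_col_free_inj (R : fieldType) (m n k : nat) (A : 'M[R]_(m, n)) :
  \rank A = n -> injective (fun B : 'M[R]_(n, k) => A *m B).
Proof.
move=> rkA B C /(congr1 trmx); rewrite !trmx_mul => /row_free_inj eqBC.
by apply: trmx_inj; apply: eqBC; rewrite /row_free mxrank_tr rkA.
Qed.

Section Norms.
Variables (R : realDomainType) (n : nat).
Implicit Types u v : 'cV[R]_n.

Lemma norm1_ge0 v : 0 <= norm1 v.
Proof. by apply: sumr_ge0 => i _. Qed.

Lemma norm2sq_ge0 v : 0 <= norm2sq v.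
Proof. by apply: sumr_ge0 => i _; rewrite sqr_ge0. Qed.

Lemma norm1_eq0 v : norm1 v = 0 -> v = 0.
Proof.
move=> /psumr_eq0P v0; apply/matrixP => i j; rewrite (ord1 j) mxE.
by apply/normr0_eq0; apply: v0.
Qed.

Lemma norm2sq_eq0 v : norm2sq v = 0 -> v = 0.
Proof.
move=> /(psumr_eq0P (fun i _ => sqr_ge0 (v i 0))) v0.
apply/matrixP => i j; rewrite (ord1 j) mxE.
by apply/eqP; rewrite -sqrf_eq0; apply/eqP/v0.
Qed.

Lemma ler_norminf v (i : 'I_n) : `|v i 0| <= norminf v.
Proof. by rewrite /norminf (bigD1 i) //= le_max lexx. Qed.

Lemma dotc_le_norminf_norm1 u v : dotc u v <= norminf u * norm1 v.
Proof.
rewrite /dotc /norm1 mulr_sumr; apply: ler_sum => i _.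
rewrite (le_trans (ler_norm _)) // normrM.
by rewrite ler_wpM2r ?ler_norminf.
Qed.

Lemma norm2sqD u v :
  norm2sq (u + v) = norm2sq u + dotc u v *+ 2 + norm2sq v.
Proof.
rewrite /norm2sq /dotc -sumrMnl -!big_split /=.
by apply: eq_bigr => i _; rewrite mxE sqrrD.
Qed.

End Norms.

Section Objective.
Variables (R : realFieldType) (n p : nat) (sigma : R) (X : 'M[R]_(n, p)).
Variables (g0 : 'cV[R]_p) (bbar : 'cV[R]_n).
Hypothesis bbar_kerXt : X^T *m bbar = 0.

Let y := X *m g0 + bbar.
Let F := objective sigma X y.

Lemma objective_excess g b :
  F g b = F g0 bbar
          + (sigma * norm1 (y - X *m g - b) - dotc bbar (y - X *m g - b))
          + 2^-1 * norm2sq (b - bbar).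
Proof.
set r := y - X *m g - b.
have Fg0 : F g0 bbar = 2^-1 * norm2sq bbar.
  rewrite /F /objective /y (addrC (X *m g0)) addrK subrr /norm1.
  by rewrite big1 ?mulr0 ?add0r // => i _; rewrite mxE normr0.
have b_bbar : b - bbar = X *m (g0 - g) - r.
  by apply/matrixP => i j; rewrite /r /y mulmxBr !mxE; ring.
have bbar_r : dotc bbar (b - bbar) = - dotc bbar r.
  by rewrite b_bbar dotcBr dotc_ker_trmx // sub0r.
rewrite Fg0 /F /objective -/r -[b in norm2sq b](subrKC bbar) norm2sqD bbar_r.
by rewrite mulr2n; field.
Qed.

Lemma objective_lower_bound g b :
  F g0 bbar + (sigma - norminf bbar) * norm1 (y - X *m g - b)
    + 2^-1 * norm2sq (b - bbar) <= F g b.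
Proof.
rewrite [leRHS]objective_excess lerD2r lerD2l mulrBl lerD2l lerN2.
exact: dotc_le_norminf_norm1.
Qed.

End Objective.

Theorem proposition4p4 (R : realFieldType) (n p : nat) (X : 'M[R]_(n, p))
  (sigma : R) (f : 'cV[R]_p) (z : 'cV[R]_n) (gbar : 'cV[R]_p) (bbar : 'cV[R]_n) :
  (p < n)%N -> \rank X = p -> 0 < sigma ->
  z = X *m gbar + bbar -> X^T *m bbar = 0 ->
  norminf bbar < sigma ->
  unique_minimizer sigma X (X *m f + z) (f + gbar) bbar.
Proof.
move=> _ rkX _ -> bbar_kerXt bbar_lt.
rewrite addrA -mulmxDr; set g0 := f + gbar; set y := X *m g0 + bbar.
have slack : 0 < sigma - norminf bbar by rewrite subr_gt0.
have bound := objective_lower_bound sigma g0 bbar_kerXt.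
split=> [g b | g b le_gb].
  apply: le_trans (bound g b); rewrite -addrA lerDl.
  by rewrite addr_ge0 ?mulr_ge0 ?norm1_ge0 ?norm2sq_ge0 ?invr_ge0 ?ltW.
have := bound g b; have := norm1_ge0 (y - X *m g - b).
have := norm2sq_ge0 (b - bbar); set N1 := norm1 _; set N2 := norm2sq _.
move=> N2_ge0 N1_ge0 le_bound.
have /eqP : (sigma - norminf bbar) * N1 = 0 by nra.
rewrite mulf_eq0 gt_eqF //= => /eqP /norm1_eq0 r0.
have /eqP : 2^-1 * N2 = 0 by nra.
rewrite mulf_eq0 invr_eq0 pnatr_eq0 /= => /eqP /norm2sq_eq0 /subr0_eq b_bbar.
split=> //; apply: (mulmx_col_free_inj rkX).
by apply/esym/subr0_eq; rewrite -r0 b_bbar /y addrAC addrK.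
Qed.
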